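(* Let $d\ge 1$, $T\ge 1$, let $\mathcal{X}\subseteq\mathbb{R}^d$ be a non-empty closed convex set, and let $0<\mu\le L$. Let $f_1,\dots,f_T:\mathcal{X}\to[0,\infty)$ be differentiable with $\frac{\mu}{2}\|y-x\|^2\le f_t(y)-f_t(x)-\langle\nabla f_t(x),y-x\rangle\le\frac{L}{2}\|y-x\|^2$ for all $t$ and $x,y\in\mathcal{X}$. Let $x_1,\dots,x_T$ be the iterates of the OMGD algorithm with $K=\lceil\frac{L+\mu}{2\mu}\ln4\rceil$ from a starting point $x_0\in\mathcal{X}$. Then $$\sum_{t=1}^T\frac12\|x_t-x_{t-1}\|^2\le 5\|x_1-x_1^\star\|^2+10\mathcal{P}_{2,T}^\star.$$
   Context: $x_t^\star=\arg\min_{x\in\mathcal{X}}f_t(x)$ and $\mathcal{P}_{2,T}^\star=\sum_{t=2}^T\|x_t^\star-x_{t-1}^\star\|^2$. OMGD with parameter $K$: $x_1=x_0$; for $t=2,\dots,T$, $z_t^{(0)}=x_{t-1}$, $z_t^{(k)}=\Pi_{\mathcal{X}}\big(z_t^{(k-1)}-\frac1L\nabla f_{t-1}(z_t^{(k-1)})\big)$ ($k=1,\dots,K$), $x_t=z_t^{(K)}$, where $\Pi_{\mathcal{X}}$ is Euclidean projection onto $\mathcal{X}$. *)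

From HB Require Import structures.
From mathcomp Require Import all_boot all_order all_algebra.
From mathcomp Require Import all_classical all_reals all_analysis.
Set Implicit Arguments. Unset Strict Implicit. Unset Printing Implicit Defensive.
Import Order.TTheory GRing.Theory Num.Theory.
Import numFieldNormedType.Exports.
Local Open Scope classical_set_scope.
Local Open Scope ring_scope.

Section Defs.
Variables (R : realType) (d : nat).
Notation vec := 'rV[R]_d.

Definition dotv (u v : vec) : R := (u *m v^T) 0 0.
Definition sqnorm (u : vec) : R := dotv u u.

Definition grad (f : vec -> R) (x : vec) : vec :=
  \row_i ('d f x (delta_mx 0 i : vec)).

Definition is_proj (X : set vec) (w p : vec) : Prop :=
  X p /\ forall y, X y -> sqnorm (w - p) <= sqnorm (w - y).

Definition is_argmin (X : set vec) (f : vec -> R) (p : vec) : Prop :=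
  X p /\ forall y, X y -> f p <= f y.

Definition omgd (X : set vec) (f : nat -> vec -> R) (L : R) (K : nat)
  (x0 : vec) (x : nat -> vec) (T : nat) : Prop :=
  x 0%N = x0 /\ x 1%N = x0 /\
  forall t, (2 <= t <= T)%N ->
    exists z : nat -> vec,
      z 0%N = x t.-1 /\
      (forall k, (1 <= k <= K)%N ->
         is_proj X (z k.-1 - L^-1 *: grad (f t.-1) (z k.-1)) (z k)) /\
      x t = z K.

End Defs.

Definition Kparam (R : realType) (mu L : R) : nat :=
  `| Num.ceil ((L + mu) / (2 * mu) * ln (4 : R)) |%N.

(* Combining the variational inequality of the projection, the descent bound
   from L-smoothness and strong convexity at the minimizer, one step contracts
   the squared distance to x*_(t-1) by (L - mu)/(L + mu), so K steps contract
   it by 1/4.  With D_t = |x_t - x*_t|^2, Young's inequality then gives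
   D_t <= D_(t-1)/2 + 2 |x*_t - x*_(t-1)|^2 and |x_t - x_(t-1)|^2/2 <= 9/8 D_(t-1);
   summing the first recursion bounds the sum of the D_t by 2 D_1 + 4 P*, and
   the second turns this into the claimed bound. *)

From HB Require Import structures.
From mathcomp Require Import all_boot all_order all_algebra.
From mathcomp Require Import all_classical all_reals all_analysis.
From mathcomp Require Import ring lra zify.
Set Implicit Arguments.
Unset Strict Implicit.
Unset Printing Implicit Defensive.
Import Order.TTheory GRing.Theory Num.Theory.
Import numFieldNormedType.Exports.
Local Open Scope classical_set_scope.
Local Open Scope ring_scope.

Section InnerProduct.
Variables (R : realType) (d : nat).
Implicit Types (u v w : 'rV[R]_d).

Lemma dotvC u v : dotv u v = dotv v u.
Proof.
rewrite /dotv; have -> : v *m u^T = (u *m v^T)^T by rewrite trmx_mul trmxK.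
by rewrite [RHS]mxE.
Qed.

Lemma dotvDl u v w : dotv (u + v) w = dotv u w + dotv v w.
Proof. by rewrite /dotv mulmxDl mxE. Qed.

Lemma dotvZl (a : R) u v : dotv (a *: u) v = a * dotv u v.
Proof. by rewrite /dotv -scalemxAl mxE. Qed.

Lemma dotvNl u v : dotv (- u) v = - dotv u v.
Proof. by rewrite -scaleN1r dotvZl mulN1r. Qed.

Lemma dotvDr u v w : dotv u (v + w) = dotv u v + dotv u w.
Proof. by rewrite dotvC dotvDl !(dotvC u). Qed.

Lemma dotvZr (a : R) u v : dotv u (a *: v) = a * dotv u v.
Proof. by rewrite dotvC dotvZl dotvC. Qed.

Lemma dotvNr u v : dotv u (- v) = - dotv u v.
Proof. by rewrite dotvC dotvNl dotvC. Qed.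

Lemma sqnorm_ge0 u : 0 <= sqnorm u.
Proof.
rewrite /sqnorm /dotv mxE; apply: sumr_ge0 => i _.
by rewrite mxE -expr2 sqr_ge0.
Qed.

Lemma sqnorm0 : sqnorm (0 : 'rV[R]_d) = 0.
Proof. by rewrite /sqnorm /dotv mul0mx mxE. Qed.

Lemma sqnormZ (a : R) u : sqnorm (a *: u) = a ^+ 2 * sqnorm u.
Proof. by rewrite /sqnorm dotvZl dotvZr mulrA. Qed.

Lemma sqnormN u : sqnorm (- u) = sqnorm u.
Proof. by rewrite /sqnorm dotvNl dotvNr opprK. Qed.

Lemma sqnormBC u v : sqnorm (u - v) = sqnorm (v - u).
Proof. by rewrite -sqnormN opprB. Qed.

Lemma sqnormD u v : sqnorm (u + v) = sqnorm u + 2 * dotv u v + sqnorm v.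
Proof. by rewrite /sqnorm !(dotvDl, dotvDr) (dotvC v u); lra. Qed.

Lemma sqnormB u v : sqnorm (u - v) = sqnorm u - 2 * dotv u v + sqnorm v.
Proof. by rewrite sqnormD sqnormN dotvNr; lra. Qed.

Lemma sqnormD_le (c : R) u v : 0 < c ->
  sqnorm (u + v) <= (1 + c) * sqnorm u + (1 + c^-1) * sqnorm v.
Proof.
move=> c0; have := sqnorm_ge0 (c *: u - v).
rewrite sqnormB sqnormZ dotvZl => h.
have young : 2 * dotv u v <= c * sqnorm u + c^-1 * sqnorm v.
  rewrite -(ler_pM2l c0) mulrDr !mulrA mulfV ?gt_eqF // mul1r -expr2; lra.
rewrite sqnormD; lra.
Qed.

End InnerProduct.

Lemma convex_set_segment (R : realType) (M : lmodType R) (X : set M) (p y : M)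
  (s : R) : convex_set X -> X p -> X y -> 0 <= s -> s <= 1 ->
  X (p + s *: (y - p)).
Proof.
move=> cX Xp Xy s0 s1.
have s01 : Itv.spec (@Itv.num_sem R) (Itv.Real `[0%Z, 1%Z]) s.
  by rewrite /Itv.num_sem /= num_real /= in_itv /= s0 s1.
have := cX y p (Itv.mk s01); rewrite !inE => /(_ Xy Xp).
by rewrite /conv /= /unstable.onem scalerBl scale1r scalerBr addrCA.
Qed.

Lemma le0_of_small_steps (R : realFieldType) (a b : R) : 0 <= b ->
  (forall s, 0 < s -> s <= 1 -> 2 * s * a <= s ^+ 2 * b) -> a <= 0.
Proof.
move=> b0 small; rewrite leNgt; apply/negP => a0.
have ab0 : 0 < a + b by lra.
set s := a / (a + b).
have s0 : 0 < s by rewrite divr_gt0.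
have sab : s * (a + b) = a by rewrite mulfVK ?gt_eqF.
have s1 : s <= 1 by nra.
have := small s s0 s1; nra.
Qed.

Lemma Kparam_rate (R : realType) (mu L : R) : 0 < mu -> mu <= L ->
  ((L - mu) / (L + mu)) ^+ Kparam mu L <= 4^-1.
Proof.
move=> mu0 muL; have Lmu0 : 0 < L + mu by rewrite addr_gt0 // (lt_le_trans mu0).
set a := 2 * mu / (L + mu); set c := (L + mu) / (2 * mu) * ln (4 : R).
have a0 : 0 < a by rewrite divr_gt0 // mulr_gt0.
have qa : (L - mu) / (L + mu) = 1 - a by rewrite /a; field; rewrite gt_eqF.
have ac : a * c = ln (4 : R).
  by rewrite /a /c; field; rewrite !gt_eqF ?mulr_gt0.
have c0 : 0 <= c.
  by rewrite /c mulr_ge0 ?divr_ge0 ?mulr_ge0 ?ln_ge0 ?ler1n // ltW.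
have cK : c <= (Kparam mu L)%:R.
  rewrite /Kparam natr_absz ger0_norm ?ceil_ge0 ?ceil_ge //.
  by apply: lt_le_trans c0; rewrite ltrN10.
(* [q = 1 - a <= exp (- a)], hence [q ^ K <= exp (- a K) <= exp (- a c) = 1/4]. *)
have a1 : 0 <= 1 - a by rewrite subr_ge0 ler_pdivrMr // mul1r; lra.
rewrite qa; apply: (le_trans (lerXn2r _ _ _ (_ : 1 - a <= expR (- a)))).
- by rewrite nnegrE.
- by rewrite nnegrE expR_ge0.
- by have := expR_ge1Dx (- a); lra.
rewrite -expRM_natl -[X in _ <= X](lnK (_ : 0 < 4^-1)) ?invr_gt0 //.
rewrite lnV ?posrE // ler_expR -ac; have := ler_wpM2l (ltW a0) cK; lra.
Qed.

Section ProjectedGradient.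
Variables (R : realType) (d : nat).
Implicit Types (X : set 'rV[R]_d) (f : 'rV[R]_d -> R) (u v w p y : 'rV[R]_d).

Definition bregman f v u : R := f v - f u - dotv (grad f u) (v - u).

Lemma proj_variational_ineq X w p y :
  convex_set X -> is_proj X w p -> X y -> dotv (w - p) (y - p) <= 0.
Proof.
move=> cX [Xp pmin] Xy; apply: (@le0_of_small_steps _ _ (sqnorm (y - p))).
  exact: sqnorm_ge0.
move=> s s0 s1; have := pmin _ (convex_set_segment cX Xp Xy (ltW s0) s1).
rewrite opprD addrA (sqnormB (w - p)) sqnormZ dotvZr; lra.
Qed.

Lemma argmin_first_order X f (L : R) (xs y : 'rV[R]_d) :
  convex_set X -> 0 <= L ->
  (forall v, X v -> bregman f v xs <= L / 2 * sqnorm (v - xs)) ->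
  is_argmin X f xs -> X y -> 0 <= dotv (grad f xs) (y - xs).
Proof.
move=> cX L0 smooth [Xxs xsmin] Xy.
rewrite -oppr_le0; apply: (@le0_of_small_steps _ _ (L * sqnorm (y - xs))).
  by rewrite mulr_ge0 ?sqnorm_ge0.
move=> s s0 s1; have Xv := convex_set_segment cX Xxs Xy (ltW s0) s1.
have := xsmin _ Xv; have := smooth _ Xv.
rewrite /bregman (addrC xs) addrK dotvZr sqnormZ; nra.
Qed.

Variables (X : set 'rV[R]_d) (f : 'rV[R]_d -> R) (mu L : R) (xs : 'rV[R]_d).
Hypotheses (cX : convex_set X) (mu0 : 0 < mu) (muL : mu <= L).
Hypothesis bregman_bounds : forall u v, X u -> X v ->
  mu / 2 * sqnorm (v - u) <= bregman f v u /\
  bregman f v u <= L / 2 * sqnorm (v - u).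
Hypothesis xs_argmin : is_argmin X f xs.

Let L0 : 0 < L. Proof. exact: lt_le_trans muL. Qed.

Lemma argmin_quadratic_growth y : X y -> f xs + mu / 2 * sqnorm (y - xs) <= f y.
Proof.
move=> Xy; have Xxs := xs_argmin.1.
have := argmin_first_order cX (ltW L0)
  (fun v Xv => (bregman_bounds Xxs Xv).2) xs_argmin Xy.
have := (bregman_bounds Xxs Xy).1; rewrite /bregman; lra.
Qed.

Lemma proj_grad_contraction x p : X x ->
  is_proj X (x - L^-1 *: grad f x) p ->
  (L + mu) * sqnorm (p - xs) <= (L - mu) * sqnorm (x - xs).
Proof.
move=> Xx hp; have Xp := hp.1; have Xxs := xs_argmin.1.
have growth := argmin_quadratic_growth Xp.
have descent := (bregman_bounds Xx Xp).2.
have lower := (bregman_bounds Xx Xxs).1.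
have vi : L * dotv (x - p) (xs - p) <= dotv (grad f x) (xs - p).
  have := proj_variational_ineq cX hp Xxs.
  rewrite addrAC (dotvDl (x - p)) dotvNl dotvZl subr_le0 -(ler_pM2l L0) mulrA.
  by rewrite mulfV ?gt_eqF // mul1r.
move: growth descent lower vi; rewrite /bregman.
rewrite -[xs - x]opprB -[p - x]opprB -[xs - p]opprB.
have -> : x - xs = (x - p) + (p - xs) by rewrite addrA subrK.
rewrite !(sqnormN, sqnormD, dotvNr, dotvDr); lra.
Qed.

Lemma proj_grad_iter (K : nat) (z : nat -> 'rV[R]_d) : X (z 0%N) ->
  (forall k, (1 <= k <= K)%N ->
     is_proj X (z k.-1 - L^-1 *: grad f (z k.-1)) (z k)) ->
  X (z K) /\
  sqnorm (z K - xs) <= ((L - mu) / (L + mu)) ^+ K * sqnorm (z 0%N - xs).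
Proof.
move=> Xz0 zproj; set q := (L - mu) / (L + mu).
have Lmu0 : 0 < L + mu by rewrite addr_gt0.
have q0 : 0 <= q by rewrite divr_ge0 ?subr_ge0 // ltW.
suff iter k : (k <= K)%N ->
    X (z k) /\ sqnorm (z k - xs) <= q ^+ k * sqnorm (z 0%N - xs).
  exact: iter.
elim: k => [|k IH] kK; first by rewrite expr0 mul1r.
have [Xzk zk_le] := IH (ltnW kK); have zproj_k := zproj k.+1 kK.
split; first exact: zproj_k.1.
have step : sqnorm (z k.+1 - xs) <= q * sqnorm (z k - xs).
  by rewrite mulrAC ler_pdivlMr // mulrC proj_grad_contraction.
by apply: (le_trans step); rewrite exprSr; nra.
Qed.

Lemma proj_grad_Kparam (z : nat -> 'rV[R]_d) : X (z 0%N) ->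
  (forall k, (1 <= k <= Kparam mu L)%N ->
     is_proj X (z k.-1 - L^-1 *: grad f (z k.-1)) (z k)) ->
  X (z (Kparam mu L)) /\
  sqnorm (z (Kparam mu L) - xs) <= 4^-1 * sqnorm (z 0%N - xs).
Proof.
move=> Xz0 /(proj_grad_iter Xz0) [XzK zK_le]; split => //.
apply: (le_trans zK_le); rewrite ler_wpM2r ?sqnorm_ge0 //.
exact: Kparam_rate.
Qed.

End ProjectedGradient.

Section RecursiveSums.
Variables (R : realFieldType) (T : nat) (D P : nat -> R).
Hypotheses (T0 : (0 < T)%N) (D0 : forall t, 0 <= D t).

Let sum_shift : \sum_(2 <= t < T.+1) D t.-1 = \sum_(1 <= t < T) D t.
Proof. by rewrite big_add1. Qed.

Let sum_split1 (F : nat -> R) :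
  \sum_(1 <= t < T.+1) F t = F 1%N + \sum_(2 <= t < T.+1) F t.
Proof. by rewrite big_ltn. Qed.

Let sum_init_le : \sum_(1 <= t < T) D t <= \sum_(1 <= t < T.+1) D t.
Proof. by rewrite big_nat_recr //= lerDl. Qed.

Lemma sum_le_of_halving :
  (forall t, (2 <= t <= T)%N -> D t <= D t.-1 / 2 + 2 * P t) ->
  \sum_(1 <= t < T.+1) D t <= 2 * D 1%N + 4 * \sum_(2 <= t < T.+1) P t.
Proof.
move=> halving.
have tail : \sum_(2 <= t < T.+1) D t <=
       (\sum_(2 <= t < T.+1) D t.-1) / 2 + 2 * \sum_(2 <= t < T.+1) P t.
  by rewrite mulr_suml mulr_sumr -big_split; apply: ler_sum_nat.
by move: tail sum_init_le; rewrite sum_shift sum_split1; lra.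
Qed.

Lemma sum_le_of_step_bounds (A : nat -> R) :
  A 1%N = 0 -> (forall t, 0 <= P t) ->
  (forall t, (2 <= t <= T)%N ->
     A t <= 9 / 8 * D t.-1 /\ D t <= D t.-1 / 2 + 2 * P t) ->
  \sum_(1 <= t < T.+1) A t <= 5 * D 1%N + 10 * \sum_(2 <= t < T.+1) P t.
Proof.
move=> A1 P0 step.
have DP := sum_le_of_halving (fun t tT => (step t tT).2).
have : \sum_(2 <= t < T.+1) A t <= 9 / 8 * \sum_(2 <= t < T.+1) D t.-1.
  by rewrite mulr_sumr; apply: ler_sum_nat => t /step[].
have := D0 1%N; have : 0 <= \sum_(2 <= t < T.+1) P t by exact: sumr_ge0.
have := sum_init_le; rewrite (sum_split1 A) A1 sum_shift; lra.
Qed.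

End RecursiveSums.

Section OMGD.
Variables (R : realType) (d T : nat) (X : set 'rV[R]_d) (mu L : R).
Variables (f : nat -> 'rV[R]_d -> R) (x0 : 'rV[R]_d) (x xs : nat -> 'rV[R]_d).
Hypotheses (cX : convex_set X) (mu0 : 0 < mu) (muL : mu <= L).
Hypothesis f_bounds : forall t, (1 <= t <= T)%N -> forall u v, X u -> X v ->
  mu / 2 * sqnorm (v - u) <= bregman (f t) v u /\
  bregman (f t) v u <= L / 2 * sqnorm (v - u).
Hypotheses (Xx0 : X x0)
  (xs_argmin : forall t, (1 <= t <= T)%N -> is_argmin X (f t) (xs t)).
Hypothesis x_omgd : omgd X f L (Kparam mu L) x0 x T.

Lemma omgd_round t : (2 <= t <= T)%N -> X (x t.-1) ->
  X (x t) /\ sqnorm (x t - xs t.-1) <= 4^-1 * sqnorm (x t.-1 - xs t.-1).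
Proof.
move=> tT Xprev; have [_ [_ rounds]] := x_omgd.
have t1T : (1 <= t.-1 <= T)%N by lia.
have [z [z0 [zproj ->]]] := rounds t tT; rewrite -z0 in Xprev *.
exact: (proj_grad_Kparam cX mu0 muL (f_bounds t1T) (xs_argmin t1T) Xprev).
Qed.

Lemma omgd_in_set t : (1 <= t <= T)%N -> X (x t).
Proof.
elim: t => [//|[|t] IH] /andP[_ tT]; first by rewrite x_omgd.2.1.
have t2T : (2 <= t.+2 <= T)%N by lia.
have t1T : (1 <= t.+1 <= T)%N by lia.
exact: (omgd_round t2T (IH t1T)).1.
Qed.

Lemma omgd_step_bounds t : (2 <= t <= T)%N ->
  2^-1 * sqnorm (x t - x t.-1) <= 9 / 8 * sqnorm (x t.-1 - xs t.-1) /\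
  sqnorm (x t - xs t) <= sqnorm (x t.-1 - xs t.-1) / 2 + 2 * sqnorm (xs t - xs t.-1).
Proof.
move=> tT; have t1T : (1 <= t.-1 <= T)%N by lia.
have [_ quarter] := omgd_round tT (omgd_in_set t1T).
have := sqnormD_le (x t - xs t.-1) (xs t.-1 - x t.-1) (ltr0Sn _ 1).
have := sqnormD_le (x t - xs t.-1) (xs t.-1 - xs t) ltr01.
rewrite !addrA !subrK (sqnormBC (xs t.-1)) (sqnormBC (xs t.-1)).
lra.
Qed.

End OMGD.

Unset Implicit Arguments.

Theorem lemma3 (R : realType) (d T : nat) (X : set 'rV[R]_d) (mu L : R)
  (f : nat -> 'rV[R]_d -> R) (x0 : 'rV[R]_d) (x xs : nat -> 'rV[R]_d) :
  (0 < d)%N -> (0 < T)%N ->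
  X !=set0 -> closed X -> convex_set X ->
  0 < mu -> mu <= L ->
  (forall t, (1 <= t <= T)%N -> forall y, X y -> differentiable (f t) y) ->
  (forall t, (1 <= t <= T)%N -> forall y, X y -> 0 <= f t y) ->
  (forall t, (1 <= t <= T)%N -> forall u v, X u -> X v ->
     mu / 2 * sqnorm (v - u) <= f t v - f t u - dotv (grad (f t) u) (v - u) /\
     f t v - f t u - dotv (grad (f t) u) (v - u) <= L / 2 * sqnorm (v - u)) ->
  X x0 ->
  (forall t, (1 <= t <= T)%N -> is_argmin X (f t) (xs t)) ->
  omgd X f L (Kparam mu L) x0 x T ->
  \sum_(1 <= t < T.+1) 2^-1 * sqnorm (x t - x t.-1)
    <= 5 * sqnorm (x 1%N - xs 1%N)
       + 10 * \sum_(2 <= t < T.+1) sqnorm (xs t - xs t.-1).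
Proof.
move=> _ T0 _ _ cX mu0 muL _ _ f_bounds Xx0 xs_argmin x_omgd.
apply: (sum_le_of_step_bounds T0 (fun t => sqnorm_ge0 _)).
- by rewrite x_omgd.2.1 x_omgd.1 subrr sqnorm0 mulr0.
- by move=> t; exact: sqnorm_ge0.
- exact: (omgd_step_bounds cX mu0 muL f_bounds Xx0 xs_argmin x_omgd).
Qed.
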